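(* Let $P_0,P_1,P_2\in\mathbb H$ be distinct, let $\varepsilon\in\{-1,1\}$, and for $i\in\mathbb Z/3\mathbb Z$ let $$R_i:=\frac{\sqrt{1-2\langle P_{i+1},P_{i+2}\rangle}(P_{i+1}+P_{i+2})+\varepsilon P_{i+1}\tilde\times P_{i+2}}{\sqrt3(1-\langle P_{i+1},P_{i+2}\rangle)}.$$ Let $\alpha:=-1+\langle P_0,P_1\rangle+\langle P_1,P_2\rangle+\langle P_2,P_0\rangle$, $\chi:=\langle P_0\tilde\times P_1,P_2\rangle$, $d_i:=\sqrt{1-2\langle P_{i+1},P_{i+2}\rangle}$ and $\gamma:=3(d_0^2+1)(d_1^2+1)(d_2^2+1)$. Then for every $i\in\mathbb Z/3\mathbb Z$, $$\gamma\langle R_{i+1},R_{i+2}\rangle=(d_i^2+1)\Bigl(4\bigl(\alpha d_{i+1}d_{i+2}+\varepsilon\chi(d_{i+1}+d_{i+2})\bigr)-(d_{i+1}^2-1)(d_{i+2}^2-1)+2(d_i^2-1)\Bigr)$$ and $$\gamma\bigl(\langle R_{i+2},R_i\rangle-\langle R_i,R_{i+1}\rangle\bigr)=4(d_{i+2}-d_{i+1})\Bigl(\alpha(d_0+d_1+d_2-d_0d_1d_2)+\varepsilon\chi(1-d_0d_1-d_1d_2-d_2d_0)\Bigr).$$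
   Context: $\langle v,w\rangle=-v_1w_1+v_2w_2+v_3w_3$ on $\mathbb R^3$; $\mathbb H=\{P\in\mathbb R^3:\langle P,P\rangle=-1,\ P_1\ge1\}$; $v\tilde\times w:=J(v\times w)$ with $J=\mathrm{diag}(-1,1,1)$ and $\times$ the Euclidean cross product. $R_i$ is the centroid of the equilateral triangle erected (on the side determined by $\varepsilon$) on the side $P_{i+1}P_{i+2}$, i.e. the vertices of the Napoleonization of $P_0P_1P_2$. *)

From Stdlib Require Import Reals Lra.
Open Scope R_scope.

Record V3 := mkV3 { x1 : R; x2 : R; x3 : R }.

Definition lor (v w : V3) : R := - x1 v * x1 w + x2 v * x2 w + x3 v * x3 w.

Definition inH (P : V3) : Prop := lor P P = -1 /\ 1 <= x1 P.

Definition cross (v w : V3) : V3 :=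
  mkV3 (x2 v * x3 w - x3 v * x2 w)
       (x3 v * x1 w - x1 v * x3 w)
       (x1 v * x2 w - x2 v * x1 w).
Definition Jmap (v : V3) : V3 := mkV3 (- x1 v) (x2 v) (x3 v).
Definition lcross (v w : V3) : V3 := Jmap (cross v w).

Definition vadd (v w : V3) : V3 := mkV3 (x1 v + x1 w) (x2 v + x2 w) (x3 v + x3 w).
Definition vscale (a : R) (v : V3) : V3 := mkV3 (a * x1 v) (a * x2 v) (a * x3 v).

(* Indices in Z/3Z represented by naturals taken mod 3. *)
Definition pick3 (P0 P1 P2 : V3) (i : nat) : V3 :=
  match (i mod 3)%nat with 0%nat => P0 | 1%nat => P1 | _ => P2 end.

Definition napR (P0 P1 P2 : V3) (eps : R) (i : nat) : V3 :=
  let A := pick3 P0 P1 P2 (i + 1) in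
  let B := pick3 P0 P1 P2 (i + 2) in
  vscale (/ (sqrt 3 * (1 - lor A B)))
    (vadd (vscale (sqrt (1 - 2 * lor A B)) (vadd A B)) (vscale eps (lcross A B))).

Definition alphaP (P0 P1 P2 : V3) : R :=
  -1 + lor P0 P1 + lor P1 P2 + lor P2 P0.
Definition chiP (P0 P1 P2 : V3) : R := lor (lcross P0 P1) P2.
Definition dP (P0 P1 P2 : V3) (i : nat) : R :=
  sqrt (1 - 2 * lor (pick3 P0 P1 P2 (i + 1)) (pick3 P0 P1 P2 (i + 2))).
Definition gammaP (P0 P1 P2 : V3) : R :=
  3 * (dP P0 P1 P2 0 ^ 2 + 1) * (dP P0 P1 P2 1 ^ 2 + 1) * (dP P0 P1 P2 2 ^ 2 + 1).

From Stdlib Require Import Reals Lra Lia Psatz.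
Open Scope R_scope.

(* Expanding the Minkowski form bilinearly, the Gram entry of two Napoleon
   vertices sharing the vertex A of the triangle ABC only involves the
   pairings <A,B>, <B,C>, <C,A> and the triple product chi, because
   A ~x B is orthogonal to A and B and the Lagrange identity evaluates
   <C ~x A, A ~x B>.  Writing <P,Q> = (1 - d^2)/2 for the side parameter d,
   this gives the first identity, and alpha = (1 - d_0^2 - d_1^2 - d_2^2)/2.
   The second identity is the difference of the first identity at the other
   two vertices, and the case of an arbitrary index i is a cyclic
   relabelling of the triangle. *)

Lemma lor_sym (A B : V3) : lor A B = lor B A.
Proof. unfold lor; ring. Qed.

Lemma lor_vaddl (A B C : V3) : lor (vadd A B) C = lor A C + lor B C.
Proof. unfold lor, vadd; simpl; ring. Qed.

Lemma lor_vaddr (A B C : V3) : lor A (vadd B C) = lor A B + lor A C.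
Proof. unfold lor, vadd; simpl; ring. Qed.

Lemma lor_vscalel (k : R) (A B : V3) : lor (vscale k A) B = k * lor A B.
Proof. unfold lor, vscale; simpl; ring. Qed.

Lemma lor_vscaler (k : R) (A B : V3) : lor A (vscale k B) = k * lor A B.
Proof. unfold lor, vscale; simpl; ring. Qed.

Lemma lor_lcross_l (A B : V3) : lor (lcross A B) A = 0.
Proof. destruct A, B; unfold lor, lcross, cross, Jmap; simpl; ring. Qed.

Lemma lor_lcross_r (A B : V3) : lor (lcross A B) B = 0.
Proof. destruct A, B; unfold lor, lcross, cross, Jmap; simpl; ring. Qed.

Lemma lor_lcross_rot (A B C : V3) : lor (lcross A B) C = lor (lcross B C) A.
Proof. destruct A, B, C; unfold lor, lcross, cross, Jmap; simpl; ring. Qed.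

Lemma lor_lcross_lcross (A B C D : V3) :
  lor (lcross A B) (lcross C D) = lor A D * lor B C - lor A C * lor B D.
Proof. destruct A, B, C, D; unfold lor, lcross, cross, Jmap; simpl; ring. Qed.

Lemma alphaP_rot (A B C : V3) : alphaP B C A = alphaP A B C.
Proof. unfold alphaP; ring. Qed.

Lemma chiP_rot (A B C : V3) : chiP B C A = chiP A B C.
Proof. unfold chiP; symmetry; apply lor_lcross_rot. Qed.

(* Reverse Cauchy-Schwarz; it keeps [1 - 2 <P,Q>] and [1 - <P,Q>] positive. *)
Lemma inH_lor_le (P Q : V3) : inH P -> inH Q -> lor P Q <= -1.
Proof.
  destruct P as [a1 a2 a3], Q as [b1 b2 b3]; intros [HP Ha] [HQ Hb].
  unfold lor in *; simpl in *.
  assert (Hcs : (a2 * b2 + a3 * b3) ^ 2 <= (a2 * a2 + a3 * a3) * (b2 * b2 + b3 * b3))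
    by (pose proof (pow2_ge_0 (a2 * b3 - a3 * b2)); nra).
  assert (Ham : 2 * (a2 * b2 + a3 * b3) <= (a2 * a2 + a3 * a3) + (b2 * b2 + b3 * b3))
    by (pose proof (pow2_ge_0 (a2 - b2)); pose proof (pow2_ge_0 (a3 - b3)); nra).
  assert (Hsq : (1 + (a2 * b2 + a3 * b3)) ^ 2 <= (a1 * b1) ^ 2) by nra.
  assert (0 < a1 * b1) by nra.
  destruct (Rle_or_lt (1 + (a2 * b2 + a3 * b3)) 0); nra.
Qed.

Definition side_d (A B : V3) : R := sqrt (1 - 2 * lor A B).

Definition napoleon (eps : R) (A B : V3) : V3 :=
  vscale (/ (sqrt 3 * (1 - lor A B)))
    (vadd (vscale (side_d A B) (vadd A B)) (vscale eps (lcross A B))).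

Lemma napR_napoleon (P0 P1 P2 : V3) (eps : R) (i : nat) :
  napR P0 P1 P2 eps i
  = napoleon eps (pick3 P0 P1 P2 (i + 1)) (pick3 P0 P1 P2 (i + 2)).
Proof. reflexivity. Qed.

Lemma dP_side_d (P0 P1 P2 : V3) (i : nat) :
  dP P0 P1 P2 i = side_d (pick3 P0 P1 P2 (i + 1)) (pick3 P0 P1 P2 (i + 2)).
Proof. reflexivity. Qed.

Lemma side_d_sq (A B : V3) : inH A -> inH B -> side_d A B ^ 2 = 1 - 2 * lor A B.
Proof.
  intros HA HB; pose proof (inH_lor_le A B HA HB).
  unfold side_d; rewrite <- Rsqr_pow2; apply Rsqr_sqrt; lra.
Qed.

Lemma alphaP_side_d (A B C : V3) : inH A -> inH B -> inH C ->
  2 * alphaP A B C = 1 - side_d B C ^ 2 - side_d C A ^ 2 - side_d A B ^ 2.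
Proof.
  intros HA HB HC; rewrite !side_d_sq by assumption; unfold alphaP; ring.
Qed.

Lemma inv_sqrt3_mult (a b : R) : / (sqrt 3 * a) * / (sqrt 3 * b) = / (3 * a * b).
Proof.
  rewrite <- Rinv_mult; f_equal.
  replace (sqrt 3 * a * (sqrt 3 * b)) with (sqrt 3 * sqrt 3 * a * b) by ring.
  rewrite sqrt_sqrt; lra.
Qed.

Lemma lor_napoleon_adjacent (A B C : V3) (eps : R) :
  lor A A = -1 -> lor C A <> 1 -> lor A B <> 1 ->
  3 * (1 - lor C A) * (1 - lor A B) * lor (napoleon eps C A) (napoleon eps A B)
  = alphaP A B C * side_d C A * side_d A B
    + eps * chiP A B C * (side_d C A + side_d A B)
    - eps ^ 2 * (lor B C + lor C A * lor A B).
Proof.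
  intros HAA HCA HAB; unfold napoleon, alphaP, chiP.
  rewrite lor_vscalel, lor_vscaler, <- (Rmult_assoc (/ (sqrt 3 * _))), inv_sqrt3_mult.
  rewrite !lor_vaddl, !lor_vaddr, !lor_vscalel, !lor_vscaler, !lor_vaddl, !lor_vaddr.
  rewrite (lor_sym C (lcross A B)), (lor_sym A (lcross A B)), lor_lcross_l,
    lor_lcross_r, (lor_lcross_rot C A B), lor_lcross_lcross, (lor_sym C B), HAA.
  field; split; lra.
Qed.

Lemma napoleon_gram_vertex (A B C : V3) (eps : R) :
  inH A -> inH B -> inH C -> eps ^ 2 = 1 ->
  3 * (side_d C A ^ 2 + 1) * (side_d A B ^ 2 + 1)
    * lor (napoleon eps C A) (napoleon eps A B)
  = 4 * (alphaP A B C * side_d C A * side_d A B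
         + eps * chiP A B C * (side_d C A + side_d A B))
    - (side_d C A ^ 2 - 1) * (side_d A B ^ 2 - 1) + 2 * (side_d B C ^ 2 - 1).
Proof.
  intros HA HB HC Heps.
  pose proof (inH_lor_le C A HC HA); pose proof (inH_lor_le A B HA HB).
  rewrite !side_d_sq by assumption.
  transitivity (4 * (3 * (1 - lor C A) * (1 - lor A B)
                     * lor (napoleon eps C A) (napoleon eps A B))); [ring |].
  rewrite (lor_napoleon_adjacent A B C eps (proj1 HA)), Heps by lra; ring.
Qed.

Lemma gram_difference_algebra (da db dc al ch eps X Y : R) :
  2 * al = 1 - da ^ 2 - db ^ 2 - dc ^ 2 ->
  3 * (dc ^ 2 + 1) * (da ^ 2 + 1) * X
  = 4 * (al * dc * da + eps * ch * (dc + da))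
    - (dc ^ 2 - 1) * (da ^ 2 - 1) + 2 * (db ^ 2 - 1) ->
  3 * (da ^ 2 + 1) * (db ^ 2 + 1) * Y
  = 4 * (al * da * db + eps * ch * (da + db))
    - (da ^ 2 - 1) * (db ^ 2 - 1) + 2 * (dc ^ 2 - 1) ->
  3 * (da ^ 2 + 1) * (db ^ 2 + 1) * (dc ^ 2 + 1) * (X - Y)
  = 4 * (dc - db) * (al * (da + db + dc - da * db * dc)
                     + eps * ch * (1 - da * db - db * dc - dc * da)).
Proof.
  intros Hal HX HY.
  transitivity ((db ^ 2 + 1) * (3 * (dc ^ 2 + 1) * (da ^ 2 + 1) * X)
                - (dc ^ 2 + 1) * (3 * (da ^ 2 + 1) * (db ^ 2 + 1) * Y)); [ring |].
  rewrite HX, HY.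
  replace al with ((1 - da ^ 2 - db ^ 2 - dc ^ 2) / 2) by lra.
  field.
Qed.

Lemma napoleon_vertex_identities (A B C : V3) (eps : R) :
  inH A -> inH B -> inH C -> eps ^ 2 = 1 ->
  let da := side_d B C in
  let db := side_d C A in
  let dc := side_d A B in
  let ga := 3 * (da ^ 2 + 1) * (db ^ 2 + 1) * (dc ^ 2 + 1) in
  ga * lor (napoleon eps C A) (napoleon eps A B)
  = (da ^ 2 + 1) *
    (4 * (alphaP A B C * db * dc + eps * chiP A B C * (db + dc))
     - (db ^ 2 - 1) * (dc ^ 2 - 1) + 2 * (da ^ 2 - 1))
  /\
  ga * (lor (napoleon eps A B) (napoleon eps B C)
        - lor (napoleon eps B C) (napoleon eps C A))
  = 4 * (dc - db) *
    (alphaP A B C * (da + db + dc - da * db * dc)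
     + eps * chiP A B C * (1 - da * db - db * dc - dc * da)).
Proof.
  intros HA HB HC Heps; cbv zeta; split.
  - rewrite <- napoleon_gram_vertex by assumption; ring.
  - apply gram_difference_algebra.
    + apply alphaP_side_d; assumption.
    + rewrite <- (alphaP_rot A B C), <- (chiP_rot A B C).
      apply napoleon_gram_vertex; assumption.
    + rewrite <- (alphaP_rot A B C), <- (alphaP_rot B C A),
        <- (chiP_rot A B C), <- (chiP_rot B C A).
      apply napoleon_gram_vertex; assumption.
Qed.

Theorem lemma4p1 (P0 P1 P2 : V3) (eps : R) :
  inH P0 -> inH P1 -> inH P2 ->
  P0 <> P1 -> P1 <> P2 -> P2 <> P0 ->
  (eps = -1 \/ eps = 1) ->
  forall i : nat, (i < 3)%nat ->
    let R_ := napR P0 P1 P2 eps in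
    let d := dP P0 P1 P2 in
    let al := alphaP P0 P1 P2 in
    let ch := chiP P0 P1 P2 in
    let ga := gammaP P0 P1 P2 in
    ga * lor (R_ (i + 1)%nat) (R_ (i + 2)%nat) =
      (d i ^ 2 + 1) *
      (4 * (al * d (i + 1)%nat * d (i + 2)%nat + eps * ch * (d (i + 1)%nat + d (i + 2)%nat))
       - (d (i + 1)%nat ^ 2 - 1) * (d (i + 2)%nat ^ 2 - 1) + 2 * (d i ^ 2 - 1))
    /\
    ga * (lor (R_ (i + 2)%nat) (R_ i) - lor (R_ i) (R_ (i + 1)%nat)) =
      4 * (d (i + 2)%nat - d (i + 1)%nat) *
      (al * (d 0%nat + d 1%nat + d 2%nat - d 0%nat * d 1%nat * d 2%nat)
       + eps * ch * (1 - d 0%nat * d 1%nat - d 1%nat * d 2%nat - d 2%nat * d 0%nat)).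
Proof.
  intros HP0 HP1 HP2 _ _ _ Heps i Hi; cbv zeta.
  assert (Heps2 : eps ^ 2 = 1) by (destruct Heps as [-> | ->]; ring).
  unfold gammaP; rewrite !napR_napoleon, !dP_side_d.
  destruct i as [|[|[|i]]]; [| | | lia]; unfold pick3; simpl Nat.modulo.
  - exact (napoleon_vertex_identities P0 P1 P2 eps HP0 HP1 HP2 Heps2).
  - destruct (napoleon_vertex_identities P1 P2 P0 eps HP1 HP2 HP0 Heps2) as [E1 E2].
    rewrite alphaP_rot, chiP_rot in E1, E2.
    split; lra.
  - destruct (napoleon_vertex_identities P2 P0 P1 eps HP2 HP0 HP1 Heps2) as [E1 E2].
    rewrite 2!alphaP_rot, 2!chiP_rot in E1, E2.
    split; lra.
Qed.
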